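(* Let $\mathcal{X}$ be a compact metric space, $\kappa\colon\mathcal{X}\times\mathcal{X}\to[0,1]$ a continuous positive definite kernel with reproducing kernel Hilbert space $\mathcal{H}$, $F$ a Borel probability measure on $\mathcal{X}$, $X_1,\dots,X_n\in\mathcal{X}$ the in-sample latent positions, $\rho_n\in(0,1)$, and $d\ge1$. Let $\hat{\mathcal{P}}_d$ be the orthogonal projection in $\mathcal{H}$ onto the subspace spanned by the eigenfunctions corresponding to the $d$ largest eigenvalues of the operator $\mathcal{K}_{\mathcal{H},n}$ defined in the context. Then there is an isometric isomorphism $\imath$ from the $d$-dimensional subspace $\hat{\mathcal{P}}_d\mathcal{H}$ onto $\mathbb{R}^d$ such that for $X\in\mathcal{X}$, $$\rho_n^{-1/2}\tilde{\mathbf{Z}}^{\dagger}\mathbb{E}[\boldsymbol{\xi}]=\imath\bigl(\hat{\mathcal{P}}_d\kappa(\cdot,X)\bigr),$$ where $\mathbb{E}[\boldsymbol{\xi}]=(\rho_n\kappa(X,X_i))_{i=1}^n$.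
   Context: $\mathbf{K}=(\rho_n\kappa(X_i,X_j))_{i,j=1}^n$; $\mathbf{S}_{\mathbf{K}}$ is the $d\times d$ diagonal matrix of the $d$ largest eigenvalues of $\mathbf{K}$ (assumed positive), $\mathbf{U}_{\mathbf{K}}$ the $n\times d$ matrix of corresponding orthonormal eigenvectors, $\tilde{\mathbf{Z}}=\mathbf{U}_{\mathbf{K}}\mathbf{S}_{\mathbf{K}}^{1/2}$ and $\tilde{\mathbf{Z}}^\dagger=(\tilde{\mathbf{Z}}^T\tilde{\mathbf{Z}})^{-1}\tilde{\mathbf{Z}}^T=\mathbf{S}_{\mathbf{K}}^{-1/2}\mathbf{U}_{\mathbf{K}}^T$ its Moore–Penrose pseudo-inverse. The operator $\mathcal{K}_{\mathcal{H},n}\colon\mathcal{H}\to\mathcal{H}$ is $\mathcal{K}_{\mathcal{H},n}\eta=\frac1n\sum_{i=1}^n\langle\eta,\kappa(\cdot,X_i)\rangle_{\mathcal{H}}\kappa(\cdot,X_i)$; it is positive, self-adjoint and of finite rank. $\boldsymbol{\xi}$ is a vector of independent Bernoulli variables with $\Pr[\xi_i=1]=\rho_n\kappa(X,X_i)$.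
   Formalization: The d largest eigenvalues of $\mathbf{K}$ are strictly separated from the rest: every eigenvector of $\mathbf{K}$ orthogonal to the columns of $\mathbf{U}_{\mathbf{K}}$ has eigenvalue strictly below each diagonal entry of $\mathbf{S}_{\mathbf{K}}$. The statement above fails without it. *)

From HB Require Import structures.
From mathcomp Require Import all_boot all_order all_algebra.
From mathcomp Require Import all_classical all_reals all_analysis.
Set Implicit Arguments. Unset Strict Implicit. Unset Printing Implicit Defensive.
Import Order.TTheory GRing.Theory Num.Theory.
Local Open Scope ring_scope.

Definition pos_def_kernel (R : realType) (T : Type) (kappa : T -> T -> R) :=
  (forall x y, kappa x y = kappa y x) /\
  (forall (m : nat) (c : 'I_m -> R) (x : 'I_m -> T),
      0 <= \sum_(i < m) \sum_(j < m) c i * c j * kappa (x i) (x j)).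

Definition inner_product (R : realType) (H : lmodType R) (ip : H -> H -> R) :=
  (forall (c : R) a b h, ip (c *: a + b) h = c * ip a h + ip b h) /\
  (forall a b, ip a b = ip b a) /\
  (forall a, a != 0 -> 0 < ip a a).

(* (H, ip) is the RKHS of kappa, kfeat x being kappa(.,x):
   reproducing property <k_x, k_y> = kappa x y, and elements of H are
   determined by their evaluations h(x) = <h, k_x>. *)
Definition rkhs_feature (R : realType) (H : lmodType R) (T : Type)
    (ip : H -> H -> R) (kappa : T -> T -> R) (kfeat : T -> H) :=
  (forall x y, ip (kfeat x) (kfeat y) = kappa x y) /\
  (forall h, (forall x, ip h (kfeat x) = 0) -> h = 0).

Definition gram_K (R : realType) (T : Type) (n : nat) (rho : R)
    (kappa : T -> T -> R) (X : 'I_n -> T) : 'M[R]_n :=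
  \matrix_(i, j) (rho * kappa (X i) (X j)).

(* U (n x d, orthonormal columns) and s (diagonal of S_K) are the
   eigenvectors / eigenvalues of K for its d largest eigenvalues,
   which are positive, sorted decreasingly, and separated from the rest. *)
Definition top_eigen (R : realType) (n d : nat) (K : 'M[R]_n)
    (U : 'M[R]_(n, d)) (s : 'rV[R]_d) :=
  [/\ U^T *m U = 1%:M,
      K *m U = U *m diag_mx s,
      (forall j, 0 < s 0 j),
      (forall i j : 'I_d, (i <= j)%N -> s 0 j <= s 0 i) &
      (forall (v : 'cV[R]_n) (mu : R), v != 0 -> K *m v = mu *: v ->
          U^T *m v = 0 -> forall j, mu < s 0 j)].

Definition Ztilde (R : realType) (n d : nat) (U : 'M[R]_(n, d)) (s : 'rV[R]_d)
  : 'M[R]_(n, d) := U *m diag_mx (map_mx Num.sqrt s).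

Definition mp_pinv (R : realType) (n d : nat) (Z : 'M[R]_(n, d)) : 'M[R]_(d, n) :=
  invmx (Z^T *m Z) *m Z^T.

Definition Exi (R : realType) (T : Type) (n : nat) (rho : R)
    (kappa : T -> T -> R) (X : 'I_n -> T) (x : T) : 'cV[R]_n :=
  \col_i (rho * kappa x (X i)).

Definition KHn (R : realType) (H : lmodType R) (T : Type) (n : nat)
    (ip : H -> H -> R) (kfeat : T -> H) (X : 'I_n -> T) (eta : H) : H :=
  n%:R^-1 *: \sum_(i < n) (ip eta (kfeat (X i)) *: kfeat (X i)).

(* e_1..e_d orthonormal eigenfunctions of A with eigenvalues mu_j, which are
   the d largest: any eigenfunction orthogonal to all e_j has eigenvalue
   at most every mu_j. *)
Definition top_eigenfun (R : realType) (H : lmodType R) (d : nat)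
    (A : H -> H) (ip : H -> H -> R) (e : 'I_d -> H) (mu : 'I_d -> R) :=
  [/\ (forall i j, ip (e i) (e j) = (i == j)%:R),
      (forall j, A (e j) = mu j *: e j) &
      (forall (f : H) (nu : R), f != 0 -> A f = nu *: f ->
          (forall j, ip f (e j) = 0) -> forall j, nu <= mu j)].

Definition proj_onto (R : realType) (H : lmodType R) (d : nat)
    (ip : H -> H -> R) (e : 'I_d -> H) (h : H) : H :=
  \sum_(j < d) (ip h (e j) *: e j).

Definition isometric_iso_onto (R : realType) (H : lmodType R) (d : nat)
    (P : H -> H) (ip : H -> H -> R) (iota : H -> 'cV[R]_d) :=
  let V := fun a => exists h, a = P h in
  [/\ (forall (c : R) a b, V a -> V b -> iota (c *: a + b) = c *: iota a + iota b),
      (forall a, V a -> \sum_(i < d) (iota a i 0) ^+ 2 = ip a a) &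
      (forall v, exists2 a, V a & iota a = v)].

From HB Require Import structures.
From mathcomp Require Import all_boot all_order all_algebra.
From mathcomp Require Import all_classical all_reals all_analysis.
From mathcomp Require Import ring.
Import Order.TTheory GRing.Theory Num.Theory.
Import numFieldNormedType.Exports.
Local Open Scope ring_scope.
Set Implicit Arguments.
Unset Strict Implicit.

(* Write A = (e_j(X_i))_{i,j} for the sample values of the eigenfunctions e_j
   of K_{H,n}.  Their eigen-equation gives K A = A diag(rho n mu) and
   A^T A = diag(n mu); moreover an eigenvector v of K orthogonal to the
   columns of A lifts to the eigenfunction sum_i v_i kappa(., X_i) of K_{H,n}
   orthogonal to every e_j, so its eigenvalue is at most every rho n mu_j.
   Confronting this with the spectral gap of the top-d eigenvectors U of K
   forces col A = col U and mu > 0.  Then C = U^T A satisfies C^T C = diag(n mu)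
   and S_K C = C diag(rho n mu), so Q = sqrt(rho) S_K^(-1/2) C is orthogonal,
   iota(h) = Q (<h, e_j>)_j is the required isometry, and the identity reduces
   to C (<kappa(., x), e_j>)_j = U^T (kappa(x, X_i))_i. *)

Section DiagonalEigen.
Variable R : fieldType.

Lemma col_mul_diag m p (M : 'M[R]_(m, p)) (w : 'rV_p) j :
  col j (M *m diag_mx w) = w 0 j *: col j M.
Proof. by apply/matrixP=> i k; rewrite mxE mul_mx_diag !mxE mulrC. Qed.

Lemma col_mul m n p (B : 'M[R]_(m, n)) (M : 'M[R]_(n, p)) j :
  col j (B *m M) = B *m col j M.
Proof. by rewrite !colE mulmxA. Qed.

Lemma eigen_residual_eq0 n m p (K : 'M[R]_n) (B : 'M[R]_(n, m))
    (M : 'M[R]_(n, p)) (w : 'rV_p) (P : R -> Prop) :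
  (forall (v : 'cV_n) c, v != 0 -> K *m v = c *: v -> B^T *m v = 0 -> P c) ->
  K *m M = M *m diag_mx w -> B^T *m M = 0 -> (forall j, ~ P (w 0 j)) -> M = 0.
Proof.
move=> Kgap KM BM notP; apply/eqP/negPn/negP=> /matrix0Pn[i [j Mij]].
apply: (notP j); apply: (Kgap (col j M)).
- by apply/matrix0Pn; exists i, 0; rewrite mxE.
- by rewrite -col_mul KM col_mul_diag.
- by rewrite -col_mul BM col0.
Qed.

Lemma trmx_eigen n p (K : 'M[R]_n) (M : 'M[R]_(n, p)) (w : 'rV_p) :
  K^T = K -> K *m M = M *m diag_mx w -> M^T *m K = diag_mx w *m M^T.
Proof. by move=> KT KM; rewrite -{1}KT -trmx_mul KM trmx_mul tr_diag_mx. Qed.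

Lemma mulmx_diag_inv n (w : 'rV[R]_n) : (forall j, w 0 j != 0) ->
  diag_mx w *m diag_mx (map_mx GRing.inv w) = 1%:M.
Proof.
move=> w_neq0; rewrite mulmx_diag -diag_const_mx; congr diag_mx.
by apply/matrixP=> i j; rewrite !mxE mulfV.
Qed.

Lemma invmx_diag n (w : 'rV[R]_n) : (forall j, w 0 j != 0) ->
  invmx (diag_mx w) = diag_mx (map_mx GRing.inv w).
Proof.
move=> w_neq0; have wK := mulmx_diag_inv w_neq0.
have [w_unit _] := mulmx1_unit wK.
by rewrite -[invmx _]mulmx1 -wK mulmxA mulVmx // mul1mx.
Qed.

Lemma diag_inv_intertwine n (s l : 'rV[R]_n) (C : 'M[R]_n) :
  (forall i, s 0 i != 0) -> (forall j, l 0 j != 0) ->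
  diag_mx s *m C = C *m diag_mx l ->
  diag_mx (map_mx GRing.inv s) *m C = C *m diag_mx (map_mx GRing.inv l).
Proof.
move=> s_neq0 l_neq0 SC.
rewrite -[LHS]mulmx1 -(mulmx_diag_inv l_neq0) !mulmxA -(mulmxA _ C) -SC.
by rewrite mulmxA diag_mxC (mulmx_diag_inv s_neq0) mul1mx.
Qed.

Lemma gram_diag_cancel n (C : 'M[R]_n) (nu : 'rV_n) (w y : 'cV_n) :
  (forall j, nu 0 j != 0) -> C^T *m C = diag_mx nu ->
  C^T *m y = diag_mx nu *m w -> C *m w = y.
Proof.
move=> nu_neq0 CtC Cty.
have CNCt : C *m diag_mx (map_mx GRing.inv nu) *m C^T = 1%:M.
  by apply: mulmx1C; rewrite mulmxA CtC mulmx_diag_inv.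
rewrite -[w]mul1mx -(mulmx_diag_inv nu_neq0) diag_mxC -mulmxA -Cty.
by rewrite !mulmxA CNCt mul1mx.
Qed.

Lemma trmx_mul_ortho m n p (U : 'M[R]_(m, n)) (C : 'M[R]_(n, p)) :
  U^T *m U = 1%:M -> (U *m C)^T *m (U *m C) = C^T *m C.
Proof. by move=> UtU; rewrite trmx_mul -mulmxA (mulmxA U^T) UtU mul1mx. Qed.

Lemma ortho_cols_dim m n (U : 'M[R]_(m, n)) : U^T *m U = 1%:M -> (n <= m)%N.
Proof.
move=> UtU; rewrite -{1}(mxrank1 R n) -UtU.
exact: leq_trans (mxrankM_maxr _ _) (rank_leq_row U).
Qed.

End DiagonalEigen.

Lemma cV_sumsq (R : comPzRingType) n (v : 'cV[R]_n) :
  (v^T *m v) 0 0 = \sum_i v i 0 ^+ 2.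
Proof. by rewrite mxE; apply: eq_bigr => i _; rewrite mxE expr2. Qed.

Section DiagonalGram.
Variables (R : realFieldType) (n d : nat) (A : 'M[R]_(n, d)) (nu : 'rV[R]_d).
Hypothesis AtA : A^T *m A = diag_mx nu.

Lemma gram_diag_sumsq j : nu 0 j = \sum_l A l j ^+ 2.
Proof.
have := congr1 (fun M : 'M[R]_d => M j j) AtA; rewrite /= !mxE eqxx mulr1n => <-.
by apply: eq_bigr => l _; rewrite !mxE expr2.
Qed.

Lemma gram_diag_ge0 j : 0 <= nu 0 j.
Proof. by rewrite gram_diag_sumsq sumr_ge0 // => l _; rewrite sqr_ge0. Qed.

Lemma gram_diag_col0 j : nu 0 j = 0 -> col j A = 0.
Proof.
rewrite gram_diag_sumsq => /psumr_eq0P sq0; apply/matrixP=> l k.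
by rewrite !mxE; apply/eqP; rewrite -sqrf_eq0 sq0 // => i _; rewrite sqr_ge0.
Qed.

(* [map_mx GRing.inv nu] inverts the nonzero entries and keeps the zero ones,
   since [0^-1 = 0]: it is the pseudo-inverse of [diag_mx nu]. *)
Lemma gram_diag_pinvK :
  diag_mx nu *m diag_mx (map_mx GRing.inv nu) *m A^T = A^T.
Proof.
rewrite mulmx_diag; apply/matrixP=> j l; rewrite mul_diag_mx !mxE.
have [nu0|nu_neq0] := eqVneq (nu 0 j) 0; last by rewrite mulfV ?mul1r.
by have /matrixP/(_ l 0) := gram_diag_col0 nu0; rewrite !mxE => ->; rewrite mulr0.
Qed.

End DiagonalGram.

Section TopEigenspaceAlignment.
Variables (R : realFieldType) (n d : nat) (K : 'M[R]_n) (U A : 'M[R]_(n, d)).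
Variables (s nu : 'rV[R]_d) (rho : R).
Hypotheses (KT : K^T = K) (rho_gt0 : 0 < rho).
Hypotheses (UtU : U^T *m U = 1%:M) (KU : K *m U = U *m diag_mx s)
  (s_gt0 : forall k, 0 < s 0 k)
  (U_gap : forall (v : 'cV_n) c, v != 0 -> K *m v = c *: v -> U^T *m v = 0 ->
     forall k, c < s 0 k).
Hypotheses (AtA : A^T *m A = diag_mx nu) (KA : K *m A = A *m diag_mx (rho *: nu))
  (A_gap : forall (v : 'cV_n) c, v != 0 -> K *m v = c *: v -> A^T *m v = 0 ->
     forall j, c <= rho * nu 0 j).

Lemma top_eigvec_intertwine :
  diag_mx s *m (U^T *m A) = U^T *m A *m diag_mx (rho *: nu).
Proof. by rewrite mulmxA -(trmx_eigen KT KU) -(mulmxA U^T K) KA mulmxA. Qed.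

Lemma cols_in_top_eigenspace :
  (forall j, exists k, s 0 k <= rho * nu 0 j) -> A = U *m (U^T *m A).
Proof.
move=> dominated; apply/eqP; rewrite -subr_eq0; apply/eqP.
apply: (eigen_residual_eq0 U_gap (w := rho *: nu)).
- by rewrite mulmxBr mulmxBl KA !mulmxA KU -!mulmxA top_eigvec_intertwine !mulmxA.
- by rewrite mulmxBr (mulmxA U^T U) UtU mul1mx subrr.
- move=> j below; have [k sk] := dominated j.
  by have := below k; rewrite mxE ltNge sk.
Qed.

Lemma top_eigenspace_in_cols :
  (exists j0, forall k, rho * nu 0 j0 < s 0 k) -> exists E, U = A *m E.
Proof.
move=> [j0 j0_below]; set Ni := diag_mx (map_mx GRing.inv nu).
exists (Ni *m A^T *m U); apply/eqP; rewrite !mulmxA -subr_eq0; apply/eqP.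
apply: (eigen_residual_eq0 A_gap (w := s)).
- have KPi : K *m (A *m Ni *m A^T) = A *m Ni *m A^T *m K.
    rewrite !mulmxA KA -(mulmxA A) diag_mxC mulmxA -!mulmxA.
    by rewrite (trmx_eigen KT KA).
  by rewrite mulmxBr mulmxBl KU mulmxA KPi -!mulmxA KU.
- by rewrite mulmxBr !mulmxA AtA (gram_diag_pinvK AtA) subrr.
- by move=> k /(_ j0); rewrite leNgt j0_below.
Qed.

(* If every [rho * nu 0 j] dominates some [s 0 k], the columns of A lie in the
   top eigenspace; otherwise some [rho * nu 0 j0] lies below every [s 0 k], the
   top eigenvectors lie in col A, and [U^T *m A] is invertible. *)
Lemma top_eigenspace_aligned : (forall j, 0 < nu 0 j) /\ A = U *m (U^T *m A).
Proof.
have [/forallP dominated|] := boolP [forall j, [exists k, s 0 k <= rho * nu 0 j]].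
  have dom j : exists k, s 0 k <= rho * nu 0 j by apply/existsP/dominated.
  split; last exact: cols_in_top_eigenspace.
  move=> j; have [k sk] := dom j.
  by rewrite -(pmulr_rgt0 _ rho_gt0); apply: lt_le_trans sk.
rewrite negb_forall => /existsP[j0]; rewrite negb_exists => /forallP j0_below.
have [E UE] : exists E, U = A *m E.
  by apply: top_eigenspace_in_cols; exists j0 => k; rewrite ltNge j0_below.
have EC : E *m (U^T *m A) = 1%:M by apply: mulmx1C; rewrite -mulmxA -UE.
have AUC : A = U *m (U^T *m A).
  by apply/esym; rewrite {1}UE -mulmxA EC mulmx1.
split=> // j; rewrite lt_def (gram_diag_ge0 AtA) andbT; apply/eqP=> nu0.
have := congr1 (col j) EC; rewrite col_mul !col_mul (gram_diag_col0 AtA nu0).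
rewrite !mulmx0 col1 => /matrixP/(_ j 0); rewrite !mxE !eqxx => /eqP.
by rewrite eq_sym oner_eq0.
Qed.

End TopEigenspaceAlignment.

Section InnerProduct.
Variables (R : realType) (H : lmodType R) (ip : H -> H -> R).
Hypothesis ip_inner : inner_product ip.

Lemma ipC a b : ip a b = ip b a.
Proof. by case: ip_inner => _ []. Qed.

Lemma ipDl a b h : ip (a + b) h = ip a h + ip b h.
Proof. by case: ip_inner => lin _; rewrite -[a]scale1r lin mul1r scale1r. Qed.

Lemma ip0l h : ip 0 h = 0.
Proof. by apply: (@addrI _ (ip 0 h)); rewrite addr0 -ipDl addr0. Qed.

Lemma ipZl c a h : ip (c *: a) h = c * ip a h.
Proof. by case: ip_inner => lin _; rewrite -[c *: a]addr0 lin ip0l addr0. Qed.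

Lemma ip_suml m (c : 'I_m -> R) (F : 'I_m -> H) h :
  ip (\sum_i c i *: F i) h = \sum_i c i * ip (F i) h.
Proof.
rewrite (big_morph (ip^~ h) (fun a b => ipDl a b h) (ip0l h)).
by apply: eq_bigr => i _; rewrite ipZl.
Qed.

Variables (d : nat) (e : 'I_d -> H).
Hypothesis e_orthonormal : forall i j, ip (e i) (e j) = (i == j)%:R.

Definition ocoord (a : H) : 'cV[R]_d := \col_j ip a (e j).

Lemma ocoord_comb (c : 'cV[R]_d) : ocoord (\sum_l c l 0 *: e l) = c.
Proof.
apply/matrixP=> j k; rewrite (ord1 k) mxE ip_suml (bigD1 j) //= e_orthonormal.
by rewrite eqxx mulr1 big1 ?addr0 // => l /negbTE jl; rewrite e_orthonormal jl mulr0.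
Qed.

Lemma proj_ontoE h : proj_onto ip e h = \sum_l ocoord h l 0 *: e l.
Proof. by apply: eq_bigr => l _; rewrite mxE. Qed.

Lemma ocoord_proj h : ocoord (proj_onto ip e h) = ocoord h.
Proof. by rewrite proj_ontoE ocoord_comb. Qed.

Lemma ip_proj h :
  ip (proj_onto ip e h) (proj_onto ip e h) = ((ocoord h)^T *m ocoord h) 0 0.
Proof.
rewrite {1}proj_ontoE ip_suml mxE; apply: eq_bigr => l _.
have /matrixP/(_ l 0) := ocoord_proj h; rewrite !mxE => proj_l.
by rewrite (ipC (e l)) proj_l.
Qed.

Lemma isometric_iso_ocoord (Q : 'M[R]_d) : Q^T *m Q = 1%:M ->
  isometric_iso_onto (proj_onto ip e) ip (fun a => Q *m ocoord a).
Proof.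
move=> QtQ; split.
- move=> c a b _ _; rewrite scalemxAr -mulmxDr; congr (_ *m _).
  by apply/matrixP=> j k; rewrite !mxE ipDl ipZl.
- move=> _ [h ->]; rewrite ocoord_proj ip_proj -cV_sumsq.
  by rewrite trmx_mul -mulmxA (mulmxA Q^T) QtQ mul1mx.
- move=> v; exists (\sum_l (Q^T *m v) l 0 *: e l).
    by exists (\sum_l (Q^T *m v) l 0 *: e l); rewrite proj_ontoE ocoord_comb.
  by rewrite ocoord_comb mulmxA (mulmx1C QtQ) mul1mx.
Qed.

End InnerProduct.

Section SampleOperator.
Variables (R : realType) (T : Type) (H : lmodType R) (ip : H -> H -> R).
Variables (kappa : T -> T -> R) (kfeat : T -> H) (n d : nat) (X : 'I_n -> T).
Variables (e : 'I_d -> H) (mu : 'I_d -> R) (rho : R).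
Hypotheses (ip_inner : inner_product ip) (n_gt0 : (0 < n)%N).
Hypotheses (kappa_sym : forall x y, kappa x y = kappa y x)
  (kfeat_ip : forall x y, ip (kfeat x) (kfeat y) = kappa x y).
Hypothesis e_top : top_eigenfun (KHn ip kfeat X) ip e mu.

Definition eval_mx : 'M[R]_(n, d) := \matrix_(i, j) ip (e j) (kfeat (X i)).

Definition sample_fun (v : 'cV[R]_n) : H := \sum_i v i 0 *: kfeat (X i).

Local Notation nu := (\row_j (n%:R * mu j)).
Local Notation K := (gram_K rho kappa X).

Lemma eval_mx_sum j h :
  \sum_l eval_mx l j * ip (kfeat (X l)) h = n%:R * mu j * ip (e j) h.
Proof.
have [_ e_eigen _] := e_top; have := congr1 (ip^~ h) (e_eigen j).
rewrite /KHn /= !(ipZl ip_inner) (ip_suml ip_inner) -mulrA => <-.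
rewrite mulrA mulfV ?pnatr_eq0 -?lt0n // mul1r.
by apply: eq_bigr => l _; rewrite mxE.
Qed.

Lemma gram_K_sym : K^T = K.
Proof. by apply/matrixP=> i j; rewrite !mxE kappa_sym. Qed.

Lemma gram_K_eval_mx : K *m eval_mx = eval_mx *m diag_mx (rho *: nu).
Proof.
apply/matrixP=> l j; rewrite mul_mx_diag !mxE mulrC -mulrA -eval_mx_sum.
rewrite mulr_sumr; apply: eq_bigr => i _.
by rewrite !mxE kfeat_ip (kappa_sym (X l)) -mulrA [_ * kappa _ _]mulrC.
Qed.

Lemma eval_mx_gram : eval_mx^T *m eval_mx = diag_mx nu.
Proof.
have [e_orth _ _] := e_top; apply/matrixP=> i j; rewrite !mxE.
transitivity (n%:R * mu j * (j == i)%:R).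
  rewrite -e_orth -eval_mx_sum; apply: eq_bigr => l _.
  by rewrite !mxE mulrC [ip (e i) _]ipC.
by have [->|ij] := eqVneq i j; rewrite ?mulr1 ?mulr0.
Qed.

Lemma eval_mx_feat x :
  eval_mx^T *m \col_i kappa x (X i) = diag_mx nu *m ocoord ip e (kfeat x).
Proof.
apply/matrixP=> j k; rewrite (ord1 k) mul_diag_mx !mxE (ipC ip_inner (kfeat x)).
rewrite -eval_mx_sum.
by apply: eq_bigr => l _; rewrite !mxE kfeat_ip kappa_sym.
Qed.

Section EigenvectorLift.
Variables (v : 'cV[R]_n) (c : R).
Hypotheses (rho_neq0 : rho != 0) (Kv : K *m v = c *: v).

Lemma gram_sample_eigen i :
  \sum_l v l 0 * kappa (X l) (X i) = c / rho * v i 0.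
Proof.
apply: (mulfI rho_neq0); rewrite mulrA mulrCA mulfV // mulr1.
have /matrixP/(_ i 0) := Kv; rewrite !mxE => <-; rewrite mulr_sumr.
by apply: eq_bigr => l _; rewrite !mxE (kappa_sym (X l)) [v l 0 * _]mulrC mulrA.
Qed.

Lemma KHn_sample_fun :
  KHn ip kfeat X (sample_fun v) = (n%:R^-1 * (c / rho)) *: sample_fun v.
Proof.
rewrite /KHn -scalerA; apply: congr1; rewrite {2}/sample_fun scaler_sumr.
apply: eq_bigr => i _.
rewrite (ip_suml ip_inner); under eq_bigr do rewrite kfeat_ip.
by rewrite gram_sample_eigen scalerA.
Qed.

Lemma ip_sample_fun_self :
  ip (sample_fun v) (sample_fun v) = c / rho * \sum_i v i 0 ^+ 2.
Proof.
rewrite {1}/sample_fun (ip_suml ip_inner) mulr_sumr; apply: eq_bigr => i _.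
rewrite (ipC ip_inner) (ip_suml ip_inner); under eq_bigr do rewrite kfeat_ip.
by rewrite gram_sample_eigen expr2 mulrCA.
Qed.

End EigenvectorLift.

Lemma ip_sample_fun_e (v : 'cV[R]_n) j :
  ip (sample_fun v) (e j) = (eval_mx^T *m v) j 0.
Proof.
rewrite (ip_suml ip_inner) !mxE; apply: eq_bigr => l _.
by rewrite !mxE (ipC ip_inner) mulrC.
Qed.

Lemma gram_K_gap : 0 < rho ->
  forall (v : 'cV_n) c, v != 0 -> K *m v = c *: v -> eval_mx^T *m v = 0 ->
  forall j, c <= rho * nu 0 j.
Proof.
move=> rho_gt0 v c v_neq0 Kv Atv j; have rho_neq0 := lt0r_neq0 rho_gt0.
have [c_le0|c_gt0] := lerP c 0.
  apply: le_trans c_le0 (mulr_ge0 (ltW rho_gt0) _).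
  exact: (gram_diag_ge0 eval_mx_gram).
have f_neq0 : sample_fun v != 0.
  apply: contra_neq v_neq0 => f0; have := ip_sample_fun_self rho_neq0 Kv.
  rewrite f0 ip0l // => /esym/eqP.
  rewrite mulf_eq0 (gt_eqF (divr_gt0 c_gt0 rho_gt0)).
  move=> /eqP/psumr_eq0P sq0; apply/matrixP=> i k; rewrite (ord1 k) mxE.
  by apply/eqP; rewrite -sqrf_eq0 sq0 // => l _; rewrite sqr_ge0.
have [_ _ e_max] := e_top.
have := e_max _ _ f_neq0 (KHn_sample_fun rho_neq0 Kv) _ j.
rewrite mxE -ler_pdivrMl // -ler_pdivrMl ?ltr0n // [_^-1 * c]mulrC.
by apply=> i; rewrite ip_sample_fun_e Atv mxE.
Qed.

End SampleOperator.

Section Whitening.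
Variables (R : rcfType) (d : nat).

Definition diag_isqrt (s : 'rV[R]_d) : 'M[R]_d :=
  diag_mx (map_mx (fun x => (Num.sqrt x)^-1) s).

Lemma diag_isqrtK (s : 'rV[R]_d) : (forall j, 0 < s 0 j) ->
  diag_isqrt s *m diag_isqrt s = diag_mx (map_mx GRing.inv s).
Proof.
move=> s_gt0; rewrite mulmx_diag; congr diag_mx; apply/matrixP=> i j.
by rewrite (ord1 i) !mxE -invfM -expr2 sqr_sqrtr // ltW.
Qed.

Definition whiten (rho : R) (s : 'rV[R]_d) (C : 'M[R]_d) : 'M[R]_d :=
  Num.sqrt rho *: (diag_isqrt s *m C).

Lemma whiten_orthogonal (C : 'M[R]_d) (s nu : 'rV[R]_d) (rho : R) :
  0 < rho -> (forall j, 0 < s 0 j) -> (forall j, 0 < nu 0 j) ->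
  C^T *m C = diag_mx nu -> diag_mx s *m C = C *m diag_mx (rho *: nu) ->
  (whiten rho s C)^T *m whiten rho s C = 1%:M.
Proof.
move=> rho_gt0 s_gt0 nu_gt0 CtC SC; rewrite /whiten; set M := diag_isqrt s *m C.
have l_neq0 j : (rho *: nu) 0 j != 0 by rewrite mxE mulf_neq0 ?lt0r_neq0.
have trZ : (Num.sqrt rho *: M)^T = Num.sqrt rho *: M^T.
  by apply/matrixP=> i j; rewrite !mxE.
rewrite trZ -scalemxAl -scalemxAr scalerA -expr2 sqr_sqrtr ?ltW //.
rewrite /M trmx_mul tr_diag_mx -mulmxA (mulmxA (diag_isqrt s)) diag_isqrtK //.
have s_neq0 i : s 0 i != 0 by rewrite lt0r_neq0.
rewrite (diag_inv_intertwine s_neq0 l_neq0 SC).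
rewrite mulmxA CtC mulmx_diag; apply/matrixP=> i j; rewrite !mxE mulrnAr.
have rho_nu : rho * (nu 0 i / (rho * nu 0 i)) = 1 by field; rewrite !lt0r_neq0.
by rewrite rho_nu.
Qed.

End Whitening.

Lemma mp_pinv_Ztilde (R : realType) n d (U : 'M[R]_(n, d)) (s : 'rV[R]_d) :
  U^T *m U = 1%:M -> (forall j, 0 < s 0 j) ->
  mp_pinv (Ztilde U s) = diag_isqrt s *m U^T.
Proof.
move=> UtU s_gt0; have s_neq0 j : s 0 j != 0 by rewrite lt0r_neq0.
have ZtZ : (Ztilde U s)^T *m Ztilde U s = diag_mx s.
  rewrite /Ztilde trmx_mul tr_diag_mx -mulmxA (mulmxA U^T) UtU mul1mx mulmx_diag.
  congr diag_mx; apply/matrixP=> i j.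
  by rewrite (ord1 i) !mxE -expr2 sqr_sqrtr // ltW.
rewrite /mp_pinv ZtZ invmx_diag // /Ztilde trmx_mul tr_diag_mx mulmxA mulmx_diag.
congr (diag_mx _ *m _); apply/matrixP=> i j; rewrite (ord1 i) !mxE.
rewrite -{1}(sqr_sqrtr (ltW (s_gt0 j))) expr2 invfM -mulrA mulVf ?mulr1 //.
by rewrite sqrtr_eq0 -ltNge.
Qed.

Unset Implicit Arguments.

Theorem lemma15 (R : realType) (T : pseudoMetricType R) (H : lmodType R)
    (ip : H -> H -> R) (kappa : T -> T -> R) (kfeat : T -> H)
    (n d : nat) (X : 'I_n -> T) (rho : R)
    (U : 'M[R]_(n, d)) (s : 'rV[R]_d) (e : 'I_d -> H) (mu : 'I_d -> R) :
  hausdorff_space T -> compact [set: T] ->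
  continuous (fun p : T * T => (kappa p.1 p.2 : R)) ->
  (forall x y, 0 <= kappa x y <= 1) ->
  pos_def_kernel kappa ->
  inner_product ip -> rkhs_feature ip kappa kfeat ->
  0 < rho < 1 -> (0 < d)%N ->
  top_eigen (gram_K rho kappa X) U s ->
  top_eigenfun (KHn ip kfeat X) ip e mu ->
  exists iota : H -> 'cV[R]_d,
    isometric_iso_onto (proj_onto ip e) ip iota /\
    forall x : T,
      (Num.sqrt rho)^-1 *: (mp_pinv (Ztilde U s) *m Exi rho kappa X x)
      = iota (proj_onto ip e (kfeat x)).
Proof.
move=> _ _ _ _ [kappa_sym _] ip_inner [kfeat_ip _] /andP[rho_gt0 _] d_gt0.
move=> [UtU KU s_gt0 _ U_gap] e_top.
have n_gt0 : (0 < n)%N := leq_trans d_gt0 (ortho_cols_dim UtU).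
set A := eval_mx ip kfeat X e; set nu := \row_j (n%:R * mu j).
have [e_orth _ _] := e_top.
have KT := gram_K_sym X rho kappa_sym.
have AtA : A^T *m A = diag_mx nu := eval_mx_gram ip_inner n_gt0 e_top.
have KA := gram_K_eval_mx rho ip_inner n_gt0 kappa_sym kfeat_ip e_top.
have A_gap := gram_K_gap ip_inner n_gt0 kappa_sym kfeat_ip e_top rho_gt0.
have [nu_gt0 AUC] :=
  top_eigenspace_aligned KT rho_gt0 UtU KU s_gt0 U_gap AtA KA A_gap.
set C := U^T *m A in AUC *.
have CtC : C^T *m C = diag_mx nu by rewrite -AtA AUC [RHS]trmx_mul_ortho.
have SC := top_eigvec_intertwine KT KU KA.
exists (fun a => whiten rho s C *m ocoord ip e a); split.
  apply: (isometric_iso_ocoord ip_inner e_orth).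
  exact: whiten_orthogonal rho_gt0 s_gt0 nu_gt0 CtC SC.
move=> x; rewrite (ocoord_proj ip_inner e_orth) (mp_pinv_Ztilde UtU s_gt0).
have Exi_col : Exi rho kappa X x = rho *: \col_i kappa x (X i).
  by apply/matrixP=> i j; rewrite !mxE.
have Cco : C *m ocoord ip e (kfeat x) = U^T *m \col_i kappa x (X i).
  apply: (gram_diag_cancel _ CtC) => [j|]; first by rewrite lt0r_neq0.
  rewrite mulmxA -trmx_mul -AUC.
  exact: eval_mx_feat ip_inner n_gt0 kappa_sym kfeat_ip e_top x.
rewrite Exi_col -scalemxAl -mulmxA Cco -scalemxAr scalerA mulmxA; congr (_ *: _).
by rewrite -{2}(sqr_sqrtr (ltW rho_gt0)) expr2 mulKf // sqrtr_eq0 -ltNge.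
Qed.
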